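(* Let $H$ be a Hermitian operator all of whose eigenvalues lie in $[0,1/2]$, let $L\ge4$ be an integer, $e_0$ real and $\Delta>1/\sqrt L$, set $\omega=\Delta-1/\sqrt L$, and assume $\omega<1$, $[e_0-\Delta/2,e_0+\Delta/2]\subseteq[0,1/2]$ and $(e_0\pm\omega/2)L\in\mathbb Z$. Then $\|Q(H)-\Pi_\Delta Q(H)\|\le\frac{2}{\sqrt L}$ (operator norm).
   Context: $\mathrm{sinc}_L(x)=\frac{\sin(\pi Lx)}{L\sin(\pi x)}$ (extended continuously to integers), and $Q(H)=\sum_{m=(e_0-\omega/2)L}^{(e_0+\omega/2)L}\mathrm{sinc}_L(H-m/L)^2$ (sum over consecutive integers). $\Pi_\Delta$ denotes the orthogonal projector onto the span of eigenvectors of $H$ with eigenvalue in $[e_0-\Delta/2,e_0+\Delta/2]$. *)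

From HB Require Import structures.
From mathcomp Require Import all_boot all_order all_algebra.
From mathcomp Require Import sesquilinear spectral.
From mathcomp Require Import complex.
From mathcomp Require Import classical_sets reals trigo.

Set Implicit Arguments.
Unset Strict Implicit.
Unset Printing Implicit Defensive.

Import Order.TTheory GRing.Theory Num.Theory.
Local Open Scope ring_scope.

(* sinc_L(x) = sin(pi L x) / (L sin(pi x)), extended continuously to the
   integers: at x = k in Z the limit is (-1)^((L-1) k). *)
Definition sincL {R : realType} (L : nat) (x : R) : R :=
  if x \is a Num.int then (-1) ^ ((L.-1)%:Z * Num.floor x)
  else sin (pi * L%:R * x) / (L%:R * sin (pi * x)).

(* Q(h) = sum_{m = a}^{b} sinc_L(h - m/L)^2, sum over the consecutive integers
   m = a, a+1, ..., b  (a = (e0 - w/2) L, b = (e0 + w/2) L, with a <= b). *)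
Definition Qfun {R : realType} (L : nat) (a b : int) (h : R) : R :=
  \sum_(k < (absz (b - a)).+1)
     (sincL L (h - (a + k%:Z)%:~R / L%:R)) ^+ 2.

(* Functional calculus f(H) of a normal (here Hermitian) matrix H, via the
   unitary diagonalisation H = P^-1 diag(d) P given by mathcomp's spectral
   theorem (spectralmx / spectral_diag); eigenvalues of a Hermitian matrix are
   real, so f is applied to their real parts. *)
Definition fcalc {R : realType} (n : nat) (f : R -> R) (H : 'M[R[i]]_n)
  : 'M[R[i]]_n :=
  invmx (spectralmx H)
  *m diag_mx (map_mx (fun z : R[i] => (f (complex.Re z))%:C%C) (spectral_diag H))
  *m spectralmx H.

Definition specproj {R : realType} (n : nat) (e0 Delta : R) (H : 'M[R[i]]_n)
  : 'M[R[i]]_n :=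
  fcalc (fun x : R => if (e0 - Delta / 2 <= x <= e0 + Delta / 2) then 1 else 0) H.

Definition vnorm {R : realType} (n : nat) (v : 'cV[R[i]]_n) : R :=
  Num.sqrt (\sum_(i < n) (Normc.normc (v i 0)) ^+ 2).

Definition opnorm {R : realType} (n : nat) (A : 'M[R[i]]_n) : R :=
  sup [set vnorm (A *m v) | v in [set v : 'cV[R[i]]_n | vnorm v <= 1]]%classic.

(* Diagonalising H unitarily, Q(H) - Pi_Delta Q(H) = g(H) with
   g = Q * (1 - indicator of [e0 - Delta/2, e0 + Delta/2]), so its norm is at
   most the largest |g(x)| over eigenvalues x in [0, 1/2], and only x outside
   the window matter.  The grid {m/L : a <= m <= b} is inset by 1/(2 sqrt L)
   from the window, so for such x the grid points lie at distances
   (c + k)/L (k = 0, 1, ...) with c > sqrt L / 2.  The Jordan-type bound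
   sin(pi y)^2 >= 2 y^2 on (0, 1/2] gives sinc_L(y)^2 <= 1/(2 (L y)^2), and the
   telescoping estimate sum_k 1/(2 (c + k)^2) <= 1/(2c - 1) <= 1/c < 2/sqrt L
   concludes. *)

From HB Require Import structures.
From mathcomp Require Import all_boot all_order all_algebra.
From mathcomp Require Import sesquilinear spectral.
From mathcomp Require Import complex.
From mathcomp Require Import reals trigo.
From mathcomp Require Import topology normedtype.
From mathcomp Require Import ring lra zify.
Import Order.TTheory GRing.Theory Num.Theory numFieldNormedType.Exports.
Local Open Scope ring_scope.

Section SincBounds.
Variable R : realType.

Lemma sin_coeff'_pair_gt0 (x : R) d : 0 < x < 2 ->
  0 < sin_coeff' x d.*2 + sin_coeff' x d.*2.+1.
Proof.
move=> /andP[x_gt0 x_lt2].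
rewrite /sin_coeff' (exprSz _ d.*2) -[in (-1) ^ d.*2](muln2 d).
rewrite -(exprnP _ (d * 2)) (exprM (-1)) sqrr_sign mulr1.
rewrite mul1r mulN1r -[d.*2.+1]addn1 doubleD -addSn exprD.
rewrite -(ffact_fact (leq_addl _ _)) addnK.
rewrite mulNr -!mulrA -mulrBr mulr_gt0 ?exprn_gt0 //.
rewrite natrM invfM -[X in _ < X - _]mul1r !mulrA -mulrBl.
rewrite divr_gt0 ?ltr0n ?fact_gt0 // subr_gt0.
rewrite ltr_pdivrMr ?ltr0n ?ffact_gt0 ?leq_addl // mul1r.
have x2_lt4 : x ^+ 2 < 4 by rewrite expr2; nra.
by rewrite (lt_le_trans x2_lt4) // -[4]/(4%:R : R) ler_nat !ffactnS ffactn0; lia.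
Qed.

Lemma sin_ge_cubic (x : R) : 0 < x < 2 -> x - x ^+ 3 / 6 <= sin x.
Proof.
move=> hx; have sinx := @cvg_sin_coeff' _ x.
rewrite -(cvg_lim (@Rhausdorff R) sinx).
have -> : x - x ^+ 3 / 6 = \sum_(0 <= i < 2) sin_coeff' x i.
  rewrite 2?big_nat_recr //= big_nil add0r /sin_coeff' /= expr0z expr1z.
  by rewrite !mul1r expr1 mulN1r (_ : 3`!%:R = 6 :> R) // divr1 mulNr.
apply/ltW/lt_sum_lim_series; first by move/cvgP in sinx.
by move=> d; rewrite !add2n -doubleS; apply: sin_coeff'_pair_gt0.
Qed.

(* For [pi y <= 1] the cubic bound gives [sin (pi y) >= 5/3 y];
   beyond, [sin (pi y) > sin 1 >= 5/6]. *)
Lemma sin_pi_sqr_ge (y : R) : 0 < y <= 2^-1 -> 2 * y ^+ 2 <= sin (pi * y) ^+ 2.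
Proof.
move=> /andP[y_gt0 y_le].
have pi2 := @pi_ge2 R; have pi4 := @pihalf_lt2 R.
have piy_gt0 : 0 < pi * y by rewrite mulr_gt0 // (lt_le_trans _ pi2).
have piy_ge : 2 * y <= pi * y by rewrite ler_pM2r.
have [piy_le1 | piy_gt1] := lerP (pi * y) 1.
  have cube_le : (pi * y) ^+ 3 <= pi * y.
    rewrite -[leRHS]mul1r exprSr ler_pM2r // expr_le1 //; lra.
  have sin_ge : 5 / 3 * y <= sin (pi * y).
    have : pi * y - (pi * y) ^+ 3 / 6 <= sin (pi * y) by apply: sin_ge_cubic; lra.
    lra.
  apply: le_trans (lerXn2r 2 _ _ sin_ge); rewrite ?nnegrE ?exprMn; try lra.
  by rewrite ler_wpM2r ?exprn_ge0 //; lra.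
have sin1_ge : 5 / 6 <= sin (1 : R).
  by have := @sin_ge_cubic 1; rewrite expr1n; lra.
have sin_gt : sin 1 < sin (pi * y).
  have piy_le : pi * y <= pi / 2 by rewrite ler_pM2l //; lra.
  by rewrite ltr_sin // in_itv /=; apply/andP; split; lra.
have y2_le : y ^+ 2 <= 2^-1 ^+ 2 by rewrite lerXn2r ?nnegrE //; lra.
apply: le_trans (_ : (5 / 6) ^+ 2 <= _).
  by move: y2_le; rewrite !expr2; lra.
by rewrite lerXn2r ?nnegrE //; lra.
Qed.

Lemma sincL_sqr_le (L : nat) (z : R) : (0 < L)%N -> 0 < `|z| <= 2^-1 ->
  sincL L z ^+ 2 <= (2 * (L%:R * `|z|) ^+ 2)^-1.
Proof.
move=> L_gt0 /andP[z_gt0 z_le].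
have z_nonint : z \is a Num.int = false.
  apply/negbTE/negP => /intrP[m zE]; move: z_gt0 z_le; rewrite zE -intr_norm.
  rewrite ltr0z => m_pos; have : (1 <= `|m|)%R by lia.
  by rewrite -(ler_int R); lra.
have sin_ge : 2 * `|z| ^+ 2 <= sin (pi * z) ^+ 2.
  have -> : sin (pi * z) ^+ 2 = sin (pi * `|z|) ^+ 2.
    by case: (ger0P z) => // _; rewrite mulrN sinN sqrrN.
  by apply: sin_pi_sqr_ge; rewrite z_gt0.
have L_pos : (0 : R) < L%:R by rewrite ltr0n.
have sin_pos : 0 < sin (pi * z) ^+ 2.
  by apply: lt_le_trans sin_ge; rewrite mulr_gt0 ?exprn_gt0.
have num_le : sin (pi * L%:R * z) ^+ 2 <= 1.
  by rewrite -(ger0_norm (sqr_ge0 _)) normrX expr_le1 ?normr_ge0 ?sin_max.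
rewrite /sincL z_nonint expr_div_n exprMn.
apply: le_trans (_ : (L%:R ^+ 2 * sin (pi * z) ^+ 2)^-1 <= _).
  rewrite -[leRHS]mul1r; apply: ler_wpM2r num_le.
  by rewrite invr_ge0 mulr_ge0 ?sqr_ge0.
have rhs_pos : 0 < 2 * (L%:R * `|z|) ^+ 2.
  by rewrite mulr_gt0 // exprn_gt0 ?mulr_gt0.
have lhs_pos : 0 < L%:R ^+ 2 * sin (pi * z) ^+ 2 by rewrite mulr_gt0 // exprn_gt0.
rewrite lef_pV2 ?posrE //.
by rewrite exprMn mulrCA ler_pM2l ?exprn_gt0.
Qed.


(* Telescoping: [w^-2 <= (w - 1/2)^-1 - (w + 1/2)^-1]. *)
Lemma sum_inv_sqr_le (c : R) (N : nat) : 2^-1 < c ->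
  \sum_(k < N) ((c + k%:R) ^+ 2)^-1 <= (c - 2^-1)^-1.
Proof.
move=> c_gt.
suff telescope : \sum_(k < N) ((c + k%:R) ^+ 2)^-1 <=
    (c - 2^-1)^-1 - (c + N%:R - 2^-1)^-1.
  apply: le_trans telescope _; rewrite gerBl invr_ge0.
  by have := ler0n R N; lra.
elim: N => [|N IH]; first by rewrite big_ord0 addr0 subrr.
rewrite big_ord_recr /=; set w := c + N%:R; move: IH; rewrite -/w => IH.
have w_gt : 2^-1 < w by rewrite /w; have := ler0n R N; lra.
have step : (w ^+ 2)^-1 <= (w - 2^-1)^-1 - (w + 2^-1)^-1.
  have -> : (w - 2^-1)^-1 - (w + 2^-1)^-1 = (w ^+ 2 - 4^-1)^-1.
    by field; rewrite !expr2; apply/and3P; split; apply/eqP; nra.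
  by rewrite lef_pV2 ?posrE ?expr2; nra.
have -> : c + N.+1%:R - 2^-1 = w + 2^-1 by rewrite /w -natr1; lra.
lra.
Qed.

Lemma sum_sincL_sqr_le (L N : nat) (x c : R) (m : nat -> R) :
  (0 < L)%N -> 1 <= c ->
  (forall k, (k < N)%N ->
     `|L%:R * x - m k| = c + k%:R /\ c + k%:R <= L%:R / 2) ->
  \sum_(k < N) sincL L (x - m k / L%:R) ^+ 2 <= c^-1.
Proof.
move=> L_gt0 c_ge1 dist.
have L_pos : (0 : R) < L%:R by rewrite ltr0n.
apply: le_trans (_ : \sum_(k < N) 2^-1 * ((c + k%:R) ^+ 2)^-1 <= _).
  apply: ler_sum => k _; have [distE dist_le] := dist k (ltn_ord k).
  have scaled : L%:R * `|x - m k / L%:R| = c + k%:R.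
    rewrite -distE -{1}(ger0_norm (ltW L_pos)) -normrM mulrBr mulrCA.
    by rewrite divff ?mulr1 ?lt0r_neq0.
  have nk := ler0n R k.
  rewrite -invfM -scaled sincL_sqr_le //.
  apply/andP; split.
    by rewrite -(pmulr_rgt0 _ L_pos) scaled; lra.
  by rewrite -(ler_pM2l L_pos) scaled; lra.
rewrite -mulr_sumr.
apply: le_trans (_ : 2^-1 * (c - 2^-1)^-1 <= _).
  by rewrite ler_wpM2l ?sum_inv_sqr_le //; lra.
by rewrite -invfM lef_pV2 ?posrE; lra.
Qed.

End SincBounds.

Lemma Qfun_ge0 (R : realType) (L : nat) (a b : int) (x : R) : 0 <= Qfun L a b x.
Proof. by apply: sumr_ge0 => k _; apply: sqr_ge0. Qed.

Section Window.
Context {R : realType} {L : nat} {e0 Delta : R} {a b : int}.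
Hypotheses (L_ge4 : (4 <= L)%N) (Delta_gt : 1 / Num.sqrt L%:R < Delta).
Hypothesis window_ge0 : 0 <= e0 - Delta / 2.
Hypothesis window_le : e0 + Delta / 2 <= 2^-1.
Hypothesis aE : (e0 - (Delta - 1 / Num.sqrt L%:R) / 2) * L%:R = a%:~R.
Hypothesis bE : (e0 + (Delta - 1 / Num.sqrt L%:R) / 2) * L%:R = b%:~R.

Let s : R := Num.sqrt L%:R.

Let L_pos : (0 : R) < L%:R.
Proof. by rewrite ltr0n (leq_trans _ L_ge4). Qed.

Let s_ge2 : 2 <= s.
Proof.
rewrite -[leLHS]ger0_norm // -sqrtr_sqr ler_wsqrtr //.
by rewrite (_ : 2 ^+ 2 = 4%:R) ?ler_nat // expr2 -natrM.
Qed.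

Let sqr_s : s * s = L%:R.
Proof. by rewrite -expr2 sqr_sqrtr ?ltW. Qed.

Let s_neq0 : s != 0.
Proof. by rewrite gt_eqF // (lt_le_trans _ s_ge2). Qed.

Let aE_shift : a%:~R = L%:R * (e0 - Delta / 2) + s / 2.
Proof. by rewrite -aE -/s -sqr_s; field; exact: s_neq0. Qed.

Let bE_shift : b%:~R = L%:R * (e0 + Delta / 2) - s / 2.
Proof. by rewrite -bE -/s -sqr_s; field; exact: s_neq0. Qed.

Let window_card : ((absz (b - a))%:R : R) = b%:~R - a%:~R.
Proof.
have s_le : s <= L%:R * Delta.
  have -> : s = L%:R * (1 / s) by rewrite -sqr_s; field; exact: s_neq0.
  by rewrite ler_pM2l // ltW.
have ba_ge0 : (0 : R) <= b%:~R - a%:~R by rewrite aE_shift bE_shift; lra.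
by rewrite natr_absz ger0_norm ?intrB // -(ler0z R) intrB.
Qed.

Let sum_sincL_sqr_le_tail (x : R) (m : nat -> R) (c : R) (N : nat) : s / 2 < c ->
  (forall k, (k < N)%N ->
     `|L%:R * x - m k| = c + k%:R /\ c + k%:R <= L%:R / 2) ->
  \sum_(k < N) sincL L (x - m k / L%:R) ^+ 2 <= 2 / s.
Proof.
move=> c_gt dist; apply: le_trans (@sum_sincL_sqr_le _ L N x c m _ _ dist) _.
- by rewrite (leq_trans _ L_ge4).
- by have := s_ge2; lra.
- by rewrite -[2 / s]invf_div lef_pV2 ?posrE; have := s_ge2; lra.
Qed.

Lemma Qfun_le_below (x : R) : 0 <= x -> x < e0 - Delta / 2 ->
  Qfun L a b x <= 2 / Num.sqrt L%:R.
Proof.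
move=> x_ge0 x_lt.
have c_gt : s / 2 < a%:~R - L%:R * x.
  by move: x_lt; rewrite aE_shift -(ltr_pM2l L_pos); lra.
rewrite /Qfun.
apply: (sum_sincL_sqr_le_tail x (fun k => (a + k%:Z)%:~R) _ _ c_gt).
move=> k; rewrite ltnS -(ler_nat R) window_card intrD -pmulrn => k_le.
have := s_ge2; have := ler0n R k; split.
  by rewrite -normrN ger0_norm; [ring | lra].
have := mulr_ge0 (ltW L_pos) x_ge0.
have := window_le; rewrite -(ler_pM2l L_pos).
by move: k_le; rewrite bE_shift; lra.
Qed.

Lemma Qfun_le_above (x : R) : x <= 2^-1 -> e0 + Delta / 2 < x ->
  Qfun L a b x <= 2 / Num.sqrt L%:R.
Proof.
move=> x_le x_gt; rewrite /Qfun (reindex_inj rev_ord_inj) /=.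
have c_gt : s / 2 < L%:R * x - b%:~R.
  by move: x_gt; rewrite bE_shift -(ltr_pM2l L_pos); lra.
apply: (sum_sincL_sqr_le_tail x
  (fun k => (a + ((absz (b - a)).+1 - k.+1)%N%:Z)%:~R) _ _ c_gt).
move=> k k_lt; have k_le : (k <= absz (b - a))%N by rewrite -ltnS.
rewrite subSS intrD -pmulrn natrB // window_card.
have := s_ge2; have := ler0n R k; split.
  by rewrite ger0_norm; [ring | lra].
have := mulr_ge0 (ltW L_pos) window_ge0.
have := x_le; rewrite -(ler_pM2l L_pos).
by move: k_le; rewrite -(ler_nat R) window_card aE_shift; lra.
Qed.

Lemma Qfun_le_outside (x : R) : 0 <= x <= 2^-1 ->
  ~~ (e0 - Delta / 2 <= x <= e0 + Delta / 2) ->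
  Qfun L a b x <= 2 / Num.sqrt L%:R.
Proof.
move=> /andP[x_ge0 x_le]; rewrite negb_and -!ltNge.
by case/orP; [apply: Qfun_le_below | apply: Qfun_le_above].
Qed.

End Window.

Section OperatorNorm.
Context {R : realType} {n : nat}.
Local Notation C := R[i].
Local Open Scope sesquilinear_scope.
Implicit Types (v : 'cV[C]_n) (U A : 'M[C]_n).

Definition vnorm2 v : R := \sum_(i < n) Normc.normc (v i 0) ^+ 2.

Lemma vnorm2C v : (vnorm2 v)%:C%C = (v^t* *m v) 0 0.
Proof.
rewrite rmorph_sum mxE; apply: eq_bigr => i _; rewrite rmorphXn /= !mxE mulrC.
have -> : (Normc.normc (v i 0))%:C%C = `|v i 0|.
  by case: (v i 0) => x y; rewrite normc_def.
by rewrite normCK.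
Qed.

Lemma vnorm2_unitary U v : U \is unitarymx -> vnorm2 (U *m v) = vnorm2 v.
Proof.
move=> U_unitary; have UtU : U^t* *m U = 1%:M by rewrite -[U^t*]mul1mx mulmxKtV.
apply: complexI; rewrite !vnorm2C trmx_mul map_mxM mulmxA.
by rewrite -[_ *m U^t* *m U]mulmxA UtU mulmx1.
Qed.

Lemma vnorm_unitary U v : U \is unitarymx -> vnorm (U *m v) = vnorm v.
Proof. by move=> U_unitary; apply: (congr1 Num.sqrt); apply: vnorm2_unitary. Qed.

Lemma vnorm_diag_le (d : 'rV[C]_n) (c : R) v : 0 <= c ->
  (forall j, Normc.normc (d 0 j) <= c) -> vnorm (diag_mx d *m v) <= c * vnorm v.
Proof.
move=> c_ge0 d_le.
have : vnorm2 (diag_mx d *m v) <= c ^+ 2 * vnorm2 v.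
  rewrite /vnorm2 mulr_sumr; apply: ler_sum => i _.
  rewrite mul_diag_mx mxE Normc.normcM exprMn ler_wpM2r ?sqr_ge0 //.
  have normc_ge0 : 0 <= Normc.normc (d 0 i).
    by case: (d 0 i) => x y; apply: sqrtr_ge0.
  by rewrite lerXn2r ?nnegrE ?d_le.
move/ler_wsqrtr; rewrite sqrtrM ?sqr_ge0 // sqrtr_sqr ger0_norm //.
Qed.

Lemma opnorm_le A (c : R) :
  (forall v, vnorm v <= 1 -> vnorm (A *m v) <= c) -> opnorm A <= c.
Proof.
move=> A_le; apply: ge_sup; last by move=> _ [v v_le <-]; apply: A_le.
exists (vnorm (A *m 0)), 0 => //.
by rewrite /= /vnorm big1 ?sqrtr0 // => i _; rewrite mxE Normc.normc0 expr0n.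
Qed.

End OperatorNorm.

Section FunctionalCalculus.
Context {R : realType} {n : nat}.
Local Notation C := R[i].
Local Open Scope sesquilinear_scope.
Implicit Types (H : 'M[C]_n) (f g : R -> R).

Lemma fcalcM f g H : fcalc f H *m fcalc g H = fcalc (fun x => f x * g x) H.
Proof.
rewrite /fcalc; have := spectral_unit H.
move: (spectralmx H) (spectral_diag H) => U d U_unit.
rewrite !mulmxA (mulmxK U_unit) -[_ *m diag_mx _ *m diag_mx _]mulmxA.
apply: (congr1 (fun D => invmx U *m D *m U)); apply/matrixP => i j.
by rewrite mul_diag_mx !mxE; case: eqP => _; rewrite ?mulr0 ?rmorphM.
Qed.

Lemma fcalcB f g H : fcalc f H - fcalc g H = fcalc (fun x => f x - g x) H.
Proof.
rewrite /fcalc; move: (spectralmx H) (spectral_diag H) => U d.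
rewrite -mulmxBl -mulmxBr.
apply: (congr1 (fun D => invmx U *m D *m U)); apply/matrixP => i j.
by rewrite !mxE; case: eqP => _; rewrite ?subr0 ?rmorphB.
Qed.

Lemma eigenvalue_spectral_diag H j : H \is normalmx ->
  eigenvalue H (spectral_diag H 0 j).
Proof.
move=> /orthomx_spectralP H_eq; have U_unit := spectral_unit H.
apply/eigenvalueP; exists (row j (spectralmx H)).
  rewrite [X in _ *m X]H_eq -row_mul !mulmxA mulmxV // mul1mx.
  by apply/rowP => k; rewrite mul_diag_mx !mxE.
apply/eqP => /(congr1 (mulmx^~ (invmx (spectralmx H)))).
rewrite -row_mul mulmxV // mul0mx => /rowP /(_ j).
by rewrite !mxE eqxx => /eqP; rewrite oner_eq0.
Qed.

Lemma opnorm_fcalc_le f H (c : R) : H \is normalmx -> 0 <= c ->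
  (forall z, eigenvalue H z -> `|f (complex.Re z)| <= c) ->
  opnorm (fcalc f H) <= c.
Proof.
move=> H_normal c_ge0 f_le; apply: opnorm_le => v v_le.
have U_unitary := spectral_unitarymx H.
rewrite /fcalc invmx_unitary // -!mulmxA vnorm_unitary ?trmxC_unitary //.
apply: le_trans (vnorm_diag_le _ _ _ c_ge0 _) _.
  move=> j; rewrite mxE /= expr0n addr0 sqrtr_sqr.
  exact/f_le/eigenvalue_spectral_diag.
by rewrite vnorm_unitary // -[leRHS]mulr1 ler_wpM2l.
Qed.

End FunctionalCalculus.

Theorem mainTheorem6 (R : realType) (n : nat) (H : 'M[R[i]]_n)
  (L : nat) (e0 Delta : R) (a b : int) :
  H \is hermsymmx ->
  (forall z : R[i], eigenvalue H z -> (0 <= z <= (2 : R[i])^-1)) ->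
  (4 <= L)%N ->
  1 / Num.sqrt (L%:R) < Delta ->
  let omega := Delta - 1 / Num.sqrt (L%:R) in
  omega < 1 ->
  0 <= e0 - Delta / 2 -> e0 + Delta / 2 <= 2^-1 ->
  (e0 - omega / 2) * L%:R = a%:~R ->
  (e0 + omega / 2) * L%:R = b%:~R ->
  opnorm (fcalc (Qfun L a b) H - specproj e0 Delta H *m fcalc (Qfun L a b) H)
    <= 2 / Num.sqrt (L%:R).
Proof.
move=> H_herm H_spec L_ge4 Delta_gt omega _ window_ge0 window_le aE bE.
have bound_ge0 : 0 <= 2 / Num.sqrt L%:R :> R by rewrite divr_ge0 ?sqrtr_ge0.
rewrite /specproj fcalcM fcalcB.
apply: opnorm_fcalc_le => [||z /H_spec /=].
- exact: hermitian_normalmx.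
- exact: bound_ge0.
- have -> : (2 : R[i])^-1 = (2^-1)%:C%C by rewrite fmorphV /= rmorph_nat.
  rewrite !lecE /= => /andP[/andP[_ z_ge0] /andP[_ z_le]].
  case: ifP => z_in; first by rewrite mul1r subrr normr0.
  rewrite mul0r subr0 ger0_norm ?Qfun_ge0 //.
  by apply: (Qfun_le_outside L_ge4 Delta_gt window_ge0 window_le aE bE);
    rewrite ?z_ge0 ?z_in.
Qed.
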